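(* Let $h:[0,\infty)\to[0,\infty)$ be a super-multiplicative function, i.e. $h(xy)\ge h(x)h(y)$ for all $x,y\ge 0$, such that $h(t)\ge t$ for all $t\ge0$. Let $f:[a,b]\to\mathbb{R}$ be $h$-mid-convex, i.e. $$f\Big(\frac{x+y}{2}\Big)\le h\Big(\frac12\Big)\big(f(x)+f(y)\big)\quad\text{for all } x,y\in[a,b].$$ Then for every $n\in\mathbb{N}$, all $x_1,\dots,x_n\in[a,b]$ and all rational numbers $\lambda_1,\dots,\lambda_n\in\mathbb{Q}\cap[0,1]$ with $\sum_{i=1}^n\lambda_i=1$, $$f\Big(\sum_{i=1}^n\lambda_ix_i\Big)\le\sum_{i=1}^n h(\lambda_i)f(x_i).$$
   Context: The paper writes $h:\mathbb{R}^+\to\mathbb{R}^+$; here $\mathbb{R}^+$ is taken to be $[0,\infty)$. *)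

From HB Require Import structures.
From mathcomp Require Import all_boot all_order all_algebra.
From mathcomp Require Import reals.
Set Implicit Arguments. Unset Strict Implicit. Unset Printing Implicit Defensive.
Import Order.TTheory GRing.Theory Num.Theory.
Local Open Scope ring_scope.

(* h : [0,oo) -> [0,oo) modelled as a function R -> R, with all hypotheses
   required only on nonnegative arguments. *)
Definition nonneg_valued (R : realType) (h : R -> R) :=
  forall t, 0 <= t -> 0 <= h t.

Definition super_multiplicative (R : realType) (h : R -> R) :=
  forall x y, 0 <= x -> 0 <= y -> h x * h y <= h (x * y).

Definition h_midconvex (R : realType) (h : R -> R) (a b : R) (f : R -> R) :=
  forall x y, a <= x <= b -> a <= y <= b ->
    f ((x + y) / 2) <= h (2^-1) * (f x + f y).

From HB Require Import structures.
From mathcomp Require Import all_boot all_order all_algebra.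
From mathcomp Require Import reals.
From mathcomp Require Import ring lra.
Set Implicit Arguments.
Unset Strict Implicit.
Unset Printing Implicit Defensive.

Import Order.TTheory GRing.Theory Num.Theory.
Local Open Scope ring_scope.

(* The hypotheses on h force h t = t for t >= 0: h 1 >= 1 and h 1 ^ 2 <= h 1
   give h 1 = 1, and then t * h (t^-1) <= h t * h (t^-1) <= h 1 = 1 bounds
   h t by t.  So the statement is Jensen's inequality with rational weights
   for a midpoint convex f, proved by Cauchy's forward-backward induction:
   2^k equal weights by induction on k, any number of equal weights by padding
   the family with copies of its mean, and rational weights by repeating each
   point according to a common denominator. *)

Section SupermultiplicativeAboveIdentity.
Variables (R : realType) (h : R -> R).
Hypotheses (h_nonneg : nonneg_valued h) (h_supmul : super_multiplicative h).
Hypothesis h_ge_id : forall t, 0 <= t -> t <= h t.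

Lemma supmul_ge_id1 : h 1 = 1.
Proof.
have h1_ge1 := h_ge_id ler01.
have := h_supmul ler01 ler01; rewrite mulr1 -{3}[h 1]mulr1.
rewrite ler_pM2l ?(lt_le_trans ltr01 h1_ge1) // => h1_le1.
by apply/eqP; rewrite eq_le h1_le1.
Qed.

Lemma supmul_ge_id0 : h 0 = 0.
Proof.
have h0_ge0 := h_nonneg (lexx 0).
have h02_ge := ler_wpM2l h0_ge0 (h_ge_id (ler0n R 2)).
have := h_supmul (lexx 0) (ler0n R 2); rewrite mul0r => h02_le.
by apply/eqP; rewrite eq_le h0_ge0 andbT; lra.
Qed.

Lemma supmul_ge_id_eq t : 0 <= t -> h t = t.
Proof.
rewrite le0r => /orP[/eqP-> | t_gt0]; first exact: supmul_ge_id0.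
have tV_gt0 : 0 < t^-1 by rewrite invr_gt0.
have ht_ge := h_ge_id (ltW t_gt0).
have := h_supmul (ltW t_gt0) (ltW tV_gt0); rewrite mulfV ?gt_eqF // supmul_ge_id1.
move/(le_trans (ler_wpM2l (le_trans (ltW t_gt0) ht_ge) (h_ge_id (ltW tV_gt0)))).
by rewrite ler_pdivrMr // mul1r => ht_le; apply/eqP; rewrite eq_le ht_le.
Qed.

End SupermultiplicativeAboveIdentity.

Lemma sumr_const_seq (V : nmodType) (T : Type) (s : seq T) (v : V) :
  \sum_(y <- s) v = v *+ size s.
Proof. by rewrite big_const_seq count_predT iter_addr_0. Qed.

Section MidpointConvexJensen.
Variables (R : realFieldType) (a b : R) (f : R -> R).
Hypothesis f_mid : forall x y, a <= x <= b -> a <= y <= b ->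
  f ((x + y) / 2) <= (f x + f y) / 2.

Lemma mean_seq_itv (s : seq R) : (0 < size s)%N ->
  (forall y, y \in s -> a <= y <= b) ->
  a <= (\sum_(y <- s) y) / (size s)%:R <= b.
Proof.
move=> s_gt0 s_ab; have n_gt0 : 0 < (size s)%:R :> R by rewrite ltr0n.
rewrite ler_pdivlMr // ler_pdivrMr // !mulr_natr -!(sumr_const_seq s).
by apply/andP; split; rewrite !big_seq; apply: ler_sum => y /s_ab /andP[].
Qed.

Lemma midconvex_mean_pow2 k (s : seq R) : size s = (2 ^ k)%N ->
  (forall y, y \in s -> a <= y <= b) ->
  f ((\sum_(y <- s) y) / (2 ^ k)%:R) * (2 ^ k)%:R <= \sum_(y <- s) f y.
Proof.
elim: k s => [|k IHk] s.
  by case: s => [|y [|z s]] //= _ _; rewrite !big_cons !big_nil !addr0 divr1 mulr1.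
move=> s_size s_ab; set m := (2 ^ k)%N.
have m_gt0 : (0 < m)%N by rewrite expn_gt0.
have size_take_m : size (take m s) = m.
  by rewrite size_take s_size expnS ltn_Pmull.
have size_drop_m : size (drop m s) = m.
  by rewrite size_drop s_size expnS mul2n -addnn addnK.
have take_ab y : y \in take m s -> a <= y <= b by move/mem_take; apply: s_ab.
have drop_ab y : y \in drop m s -> a <= y <= b by move/mem_drop; apply: s_ab.
have take_le := IHk _ size_take_m take_ab.
have drop_le := IHk _ size_drop_m drop_ab.
have take_gt0 : (0 < size (take m s))%N by rewrite size_take_m.
have drop_gt0 : (0 < size (drop m s))%N by rewrite size_drop_m.
have := f_mid (mean_seq_itv take_gt0 take_ab) (mean_seq_itv drop_gt0 drop_ab).
rewrite size_take_m size_drop_m.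
have sum_split (g : R -> R) :
    \sum_(y <- s) g y = \sum_(y <- take m s) g y + \sum_(y <- drop m s) g y.
  by rewrite -big_cat cat_take_drop.
set M := m%:R in take_le drop_le *; have M_gt0 : 0 < M by rewrite ltr0n.
rewrite !sum_split expnS natrM -/M.
set S1 := \sum_(y <- take m s) y in take_le *.
set S2 := \sum_(y <- drop m s) y in drop_le *.
have -> : (S1 + S2) / (2 * M) = (S1 / M + S2 / M) / 2 by field; rewrite gt_eqF.
rewrite ler_pdivlMr ?ltr0n // => mid_le.
apply: le_trans (lerD take_le drop_le).
by rewrite mulrA -[X in _ <= X]mulrDl ler_pM2r.
Qed.

(* Padding [s] with copies of its mean up to [2 ^ size s] terms leaves the
   mean unchanged. *)
Lemma midconvex_mean (s : seq R) : (0 < size s)%N ->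
  (forall y, y \in s -> a <= y <= b) ->
  f ((\sum_(y <- s) y) / (size s)%:R) * (size s)%:R <= \sum_(y <- s) f y.
Proof.
move=> s_gt0 s_ab; set m := size s; set mu := (\sum_(y <- s) y) / m%:R.
have mu_ab : a <= mu <= b := mean_seq_itv s_gt0 s_ab.
have m_le : (m <= 2 ^ m)%N by rewrite ltnW // ltn_expl.
pose t := s ++ nseq (2 ^ m - m) mu.
have t_size : size t = (2 ^ m)%N by rewrite size_cat size_nseq subnKC.
have t_ab y : y \in t -> a <= y <= b.
  by rewrite mem_cat => /orP[/s_ab // | /nseqP[-> _]].
have := midconvex_mean_pow2 t_size t_ab.
rewrite /t !big_cat /= !big_nseq !iter_addr_0.
rewrite -[mu *+ _]mulr_natr -[f mu *+ _]mulr_natr natrB //.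
have m_gt0 : 0 < m%:R :> R by rewrite ltr0n.
have P_gt0 : 0 < (2 ^ m)%:R :> R by rewrite ltr0n expn_gt0.
have -> : \sum_(y <- s) y = mu * m%:R by rewrite /mu mulfVK // gt_eqF.
have -> : (mu * m%:R + mu * ((2 ^ m)%:R - m%:R)) / (2 ^ m)%:R = mu.
  by field; rewrite gt_eqF.
lra.
Qed.

Lemma midconvex_nat_weights (I : finType) (k : I -> nat) (x : I -> R) :
  (0 < \sum_i k i)%N -> (forall i, a <= x i <= b) ->
  f ((\sum_i x i *+ k i) / (\sum_i k i)%:R) * (\sum_i k i)%:R
    <= \sum_i f (x i) *+ k i.
Proof.
move=> k_gt0 x_ab; pose s := flatten [seq nseq (k i) (x i) | i <- index_enum I].
have sum_s (g : R -> R) : \sum_(y <- s) g y = \sum_i g (x i) *+ k i.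
  by rewrite big_flatten big_map; apply: eq_bigr => i _; rewrite big_nseq iter_addr_0.
have s_size : size s = (\sum_i k i)%N.
  rewrite size_flatten sumnE /shape big_map big_map.
  by apply: eq_bigr => i _; rewrite size_nseq.
have s_ab y : y \in s -> a <= y <= b.
  by move=> /flattenP[r /mapP[i _ ->] /nseqP[-> _]].
by have := midconvex_mean _ s_ab; rewrite s_size !sum_s; apply.
Qed.

Lemma rat_common_denominator (I : finType) (lam : I -> rat) :
  (forall i, 0 <= lam i) ->
  exists2 N : nat, (0 < N)%N & exists k : I -> nat, forall i, lam i = (k i)%:R / N%:R.
Proof.
move=> lam_ge0; pose d i := `|denq (lam i)|%N.
have d_gt0 j : (0 < d j)%N by rewrite absz_gt0 denq_neq0.
exists (\prod_j d j)%N; first exact: prodn_gt0.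
exists (fun i => `|numq (lam i)| * \prod_(j | j != i) d j)%N => i.
set P := (\prod_(j | j != i) d j)%N.
have P_neq0 : P%:R != 0 :> rat by rewrite pnatr_eq0 -lt0n prodn_gt0.
rewrite (bigD1 i) //= -/P !natrM invfM mulrACA mulfV // mulr1.
rewrite /d !natr_absz ger0_norm ?numq_ge0 // gtr0_norm ?denq_gt0 //.
by rewrite divq_num_den.
Qed.

Lemma midconvex_rat_jensen (I : finType) (lam : I -> rat) (x : I -> R) :
  (forall i, 0 <= lam i) -> \sum_i lam i = 1 -> (forall i, a <= x i <= b) ->
  f (\sum_i ratr (lam i) * x i) <= \sum_i ratr (lam i) * f (x i).
Proof.
move=> lam_ge0 lam_sum x_ab.
have [N N_gt0 [k lamE]] := rat_common_denominator lam_ge0.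
have N_neq0 : N%:R != 0 :> rat by rewrite pnatr_eq0 -lt0n.
have sum_k : (\sum_i k i)%N = N.
  have kE i : lam i * N%:R = (k i)%:R by rewrite lamE mulfVK.
  apply/eqP; rewrite -(eqr_nat rat) natr_sum -(eq_bigr _ (fun i _ => kE i)).
  by rewrite -mulr_suml lam_sum mul1r.
have ratrE i : ratr (lam i) = (k i)%:R / N%:R :> R.
  by rewrite lamE fmorph_div !rmorph_nat.
have weightedE (g : I -> R) :
    \sum_i ratr (lam i) * g i = (\sum_i g i *+ k i) / N%:R.
  by rewrite mulr_suml; apply: eq_bigr => i _; rewrite ratrE -[g i *+ _]mulr_natl mulrAC.
have k_gt0 : (0 < \sum_i k i)%N by rewrite sum_k.
move: (midconvex_nat_weights k_gt0 x_ab); rewrite sum_k.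
by rewrite !weightedE ler_pdivlMr ?ltr0n.
Qed.

End MidpointConvexJensen.

Theorem theorem2p3 (R : realType) (h : R -> R) (a b : R) (f : R -> R)
  (h_nonneg : nonneg_valued h)
  (h_supmul : super_multiplicative h)
  (h_ge_id : forall t, 0 <= t -> t <= h t)
  (f_mid : h_midconvex h a b f)
  (n : nat) (x : 'I_n -> R) (lam : 'I_n -> rat)
  (hx : forall i, a <= x i <= b)
  (hlam : forall i, 0 <= lam i <= 1)
  (hsum : \sum_(i < n) lam i = 1) :
  f (\sum_(i < n) ratr (lam i) * x i) <= \sum_(i < n) h (ratr (lam i)) * f (x i).
Proof.
have h_id := supmul_ge_id_eq h_nonneg h_supmul h_ge_id.
have lam_ge0 i : 0 <= lam i by case/andP: (hlam i).
have h_half : h 2^-1 = 2^-1 by apply: h_id; rewrite invr_ge0 ler0n.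
have f_midconvex u v : a <= u <= b -> a <= v <= b -> f ((u + v) / 2) <= (f u + f v) / 2.
  by move=> u_ab v_ab; rewrite [X in _ <= X]mulrC -[X in _ <= X * _]h_half; apply: f_mid.
have h_lam i : h (ratr (lam i)) = ratr (lam i) by rewrite h_id // ler0q.
rewrite [X in _ <= X](eq_bigr (fun i => ratr (lam i) * f (x i))) => [|i _ /=].
  exact: (midconvex_rat_jensen f_midconvex lam_ge0 hsum hx).
by rewrite h_lam.
Qed.
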